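(* Let $F_1,F_2$ be lean DQCNFs over the same universal variables, the same existential variables and the same dependency sets. Then the DQCNF $F_1\cup F_2$ (same variables and dependency sets, matrix the union of the two clause sets) is lean. Consequently every DQCNF $F$ has a largest (with respect to inclusion of clause sets) lean sub-DQCNF, called its lean kernel.
   Context: A DQCNF $F$ consists of a set $X$ of universal variables, a set $Y$ of existential variables, a dependency set $D_y\subseteq X$ for each $y\in Y$, and a matrix, a finite set of clauses over $X\cup Y$. An autarky for $F$ is a partial map $\varphi$ from a subset $\mathrm{dom}(\varphi)\subseteq Y$ to Boolean functions, where $\varphi(y)$ depends only on variables in $D_y$, such that every clause $C$ of $F$ either contains no variable of $\mathrm{dom}(\varphi)$ (then $\varphi$ does not touch $C$), or becomes a tautology (identically true as a function of all remaining variables) after substituting $\varphi(y)$ for each $y\in\mathrm{dom}(\varphi)$ occurring in $C$. An autarky is trivial if it touches no clause. $F$ is lean if it has no non-trivial autarky. A sub-DQCNF of $F$ is a DQCNF with the same variables and dependency sets whose matrix is a subset of the matrix of $F$. *)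

From mathcomp Require Import all_boot.
Set Implicit Arguments. Unset Strict Implicit. Unset Printing Implicit Defensive.

Section DQCNF.
Variables (X Y : finType).
(* X: universal variables, Y: existential variables (disjoint via the sum type) *)

(* A literal is a variable of X ∪ Y together with a polarity
   (true = positive literal, false = negative literal). *)
Definition lit := ((X + Y) * bool)%type.
Definition clause := {set lit}.

Record dqcnf := DQCNF { dep : {ffun Y -> {set X}}; matrix : {set clause} }.

Definition depends_only (S : {set X}) (f : (X -> bool) -> bool) : Prop :=
  forall a b : X -> bool, (forall x, x \in S -> a x = b x) -> f a = f b.

Definition touches (dom : {set Y}) (C : clause) : Prop :=
  exists y, y \in dom /\ exists s, (inr y, s) \in C.

(* value of a variable after substituting phi y for y in dom;
   a : assignment to X, b : assignment to remaining existential variables *)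
Definition subst_val (dom : {set Y}) (phi : Y -> (X -> bool) -> bool)
  (a : X -> bool) (b : Y -> bool) (v : X + Y) : bool :=
  match v with
  | inl x => a x
  | inr y => if y \in dom then phi y a else b y
  end.

Definition clause_true (val : X + Y -> bool) (C : clause) : Prop :=
  exists l, l \in C /\ val l.1 = l.2.

Definition autarky (F : dqcnf) (dom : {set Y}) (phi : Y -> (X -> bool) -> bool) : Prop :=
  (forall y, y \in dom -> depends_only (dep F y) (phi y)) /\
  (forall C, C \in matrix F -> touches dom C ->
     forall (a : X -> bool) (b : Y -> bool), clause_true (subst_val dom phi a b) C).

Definition trivial_autarky (F : dqcnf) (dom : {set Y}) : Prop :=
  forall C, C \in matrix F -> ~ touches dom C.

Definition lean (F : dqcnf) : Prop :=
  forall dom phi, autarky F dom phi -> trivial_autarky F dom.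

Definition sub_dqcnf (G F : dqcnf) : Prop :=
  dep G = dep F /\ matrix G \subset matrix F.

End DQCNF.

From mathcomp Require Import all_boot.
From Stdlib Require Import ClassicalEpsilon.
Set Implicit Arguments. Unset Strict Implicit. Unset Printing Implicit Defensive.

(* An autarky of a DQCNF is still an autarky of every sub-DQCNF, and it is
   trivial on a sub-DQCNF exactly when it touches none of its clauses.  So if
   every clause of F lies in some lean sub-DQCNF, no autarky of F can touch any
   clause of F: F is lean.  Both the union property and the lean kernel (the
   clauses belonging to some lean sub-DQCNF) are instances of this. *)

Definition classicb (P : Prop) : bool :=
  if excluded_middle_informative P then true else false.

Lemma classicbP (P : Prop) : reflect P (classicb P).
Proof. by rewrite /classicb; case: excluded_middle_informative; constructor. Qed.

Section LeanKernel.
Variables X Y : finType.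
Implicit Types F G : dqcnf X Y.

Lemma autarky_sub G F dom phi :
  sub_dqcnf G F -> autarky F dom phi -> autarky G dom phi.
Proof.
move=> [eq_dep sub_GF] [phi_dep phi_sat]; split=> [y y_dom | C C_G].
  by rewrite eq_dep; apply: phi_dep.
by apply: phi_sat; apply: (subsetP sub_GF).
Qed.

Lemma lean_cover F :
  (forall C, C \in matrix F ->
     exists2 G, sub_dqcnf G F /\ lean G & C \in matrix G) ->
  lean F.
Proof.
move=> cover dom phi aut_phi C C_F.
have [G [sub_GF lean_G] C_G] := cover C C_F.
exact: (lean_G dom phi (autarky_sub sub_GF aut_phi) C C_G).
Qed.

Lemma lean_setU F1 F2 :
  dep F1 = dep F2 -> lean F1 -> lean F2 ->
  lean (DQCNF (dep F1) (matrix F1 :|: matrix F2)).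
Proof.
move=> eq_dep lean_F1 lean_F2; apply: lean_cover => C.
rewrite inE => /orP[C_F1 | C_F2].
  by exists F1 => //; split=> //; split=> //; apply: subsetUl.
by exists F2 => //; split=> //; split=> //; apply: subsetUr.
Qed.

Definition in_lean_sub F (C : clause X Y) : Prop :=
  exists2 G, sub_dqcnf G F /\ lean G & C \in matrix G.

Definition lean_kernel F : dqcnf X Y :=
  DQCNF (dep F) [set C in matrix F | classicb (in_lean_sub F C)].

Lemma lean_kernel_sub F : sub_dqcnf (lean_kernel F) F.
Proof. by split=> //; apply/subsetP => C; rewrite inE => /andP[]. Qed.

Lemma lean_kernel_max F G :
  sub_dqcnf G F -> lean G -> matrix G \subset matrix (lean_kernel F).
Proof.
move=> [eq_dep sub_GF] lean_G; apply/subsetP => C C_G.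
rewrite inE (subsetP sub_GF _ C_G); apply/classicbP.
by exists G.
Qed.

Lemma lean_kernel_lean F : lean (lean_kernel F).
Proof.
apply: lean_cover => C; rewrite inE => /andP[_ /classicbP[G [sub_GF lean_G] C_G]].
exists G => //; split=> //; split; first by case: sub_GF.
exact: lean_kernel_max.
Qed.

End LeanKernel.

Theorem mainTheorem3 :
  (forall (X Y : finType) (F1 F2 : dqcnf X Y),
     dep F1 = dep F2 -> lean F1 -> lean F2 ->
     lean (DQCNF (dep F1) (matrix F1 :|: matrix F2)))
  /\
  (forall (X Y : finType) (F : dqcnf X Y),
     exists K : dqcnf X Y,
       [/\ sub_dqcnf K F, lean K &
           forall G : dqcnf X Y, sub_dqcnf G F -> lean G -> matrix G \subset matrix K]).
Proof.
split; first exact: lean_setU.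
move=> X Y F; exists (lean_kernel F); split.
- exact: lean_kernel_sub.
- exact: lean_kernel_lean.
- exact: lean_kernel_max.
Qed.
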